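(* Let $\Gamma=(\mathcal{A},\Theta,p,c)$ be a basic game that is a potential game whose potential $\Phi_\theta$ is convex for every $\theta$, and let $\mathcal{I}=(\gamma,\mathcal{T},\pi)$ be an information structure. Define, for interim flow profiles $\hat y$, $\Phi_\pi(\hat y)=\sum_{\theta\in\Theta}\sum_{\tau\in\mathcal{T}}p(\theta)\pi(\tau\mid\theta)\Phi_\theta(y(\tau))$. Then for every $\alpha>0$, every Bayesian Wardrop $\alpha$-equilibrium $\hat y$ of $(\Gamma,\mathcal{I})$ satisfies $\Phi_\pi(\hat y)\le\min_{\hat z}\Phi_\pi(\hat z)+\alpha$, where the minimum is over all interim flow profiles $\hat z$.
   Context: Basic game: $\Gamma=(\mathcal{A},\Theta,p,c)$ with $\mathcal{A}$ a finite set of actions, $\Theta$ a finite set of states, $p\in\Delta(\Theta)$ a full-support prior, and $c=(c_a)_{a\in\mathcal{A}}$ with each $c_a:\mathcal{Y}\times\Theta\to\mathbb{R}$ continuous, where $\mathcal{Y}=\Delta(\mathcal{A})=\{y\in\mathbb{R}^{\mathcal{A}}_{\ge0}:\sum_a y_a=1\}$. For $\gamma>0$, $\Delta_\gamma(\mathcal{A})=\{y\in\mathbb{R}^{\mathcal{A}}_{\ge0}:\sum_a y_a=\gamma\}$. $\Gamma$ is a potential game if for each $\theta$ there is an open set $\widetilde{\mathcal{Y}}\supseteq\mathcal{Y}$ in $\mathbb{R}^{\mathcal{A}}$ and a continuously differentiable $\Phi_\theta:\widetilde{\mathcal{Y}}\to\mathbb{R}$ with $\partial\Phi_\theta(y)/\partial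 y_a=c_a(y,\theta)$ for all $a$ and $y\in\mathcal{Y}$. Information structure: $\mathcal{I}=(\gamma,\mathcal{T},\pi)$ consisting of a finite set $\mathcal{K}$ of populations with sizes $\gamma^k>0$, $\sum_k\gamma^k=1$; finite type sets $\mathcal{T}^k$, $\mathcal{T}=\prod_k\mathcal{T}^k$; and $\pi:\Theta\to\Delta(\mathcal{T})$. An interim flow profile is $\hat y=(y^k(\tau^k))_{k,\tau^k}$ with $y^k(\tau^k)\in\Delta_{\gamma^k}(\mathcal{A})$; total flow $y(\tau)=\sum_k y^k(\tau^k)$. Let $P(\tau^k)=\sum_\theta\sum_{\tau^{-k}}p(\theta)\pi(\tau^k,\tau^{-k}\mid\theta)$. For $\varepsilon\ge0$, $\hat y$ is a Bayesian Wardrop $\varepsilon$-equilibrium of $(\Gamma,\mathcal{I})$ if for all $k$, all $\tau^k$ with $P(\tau^k)>0$ and all $a,b$ with $y^k_a(\tau^k)>0$: $\sum_\theta\sum_{\tau^{-k}}p(\theta)\pi(\tau^k,\tau^{-k}\mid\theta)c_a(y(\tau),\theta)\le\sum_\theta\sum_{\tau^{-k}}p(\theta)\pi(\tau^k,\tau^{-k}\mid\theta)c_b(y(\tau),\theta)+\varepsilon P(\tau^k)$. *)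

From HB Require Import structures.
From mathcomp Require Import all_boot all_order all_algebra.
From mathcomp Require Import all_classical all_reals all_analysis.
Set Implicit Arguments. Unset Strict Implicit. Unset Printing Implicit Defensive.
Import Order.TTheory GRing.Theory Num.Theory.
Import numFieldNormedType.Exports.
Local Open Scope classical_set_scope.
Local Open Scope ring_scope.

(* Actions are 'I_n; flow vectors y are row vectors 'rV[R]_n, y 0 a = y_a. *)

Definition Delta_g (R : realType) (n : nat) (g : R) : set 'rV[R]_n :=
  [set y | (forall a : 'I_n, 0 <= y 0 a) /\ \sum_(a < n) y 0 a = g].
Arguments Delta_g {R} n g.

Definition Ysimplex (R : realType) (n : nat) : set 'rV[R]_n := Delta_g n 1.
Arguments Ysimplex {R} n.

Definition evec (R : realType) (n : nat) (a : 'I_n) : 'rV[R]_n := delta_mx 0 a.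
Arguments evec {R n} a.

Definition is_potential (R : realType) (n : nat) (U : set 'rV[R]_n)
  (Phi : 'rV[R]_n -> R) (c : 'I_n -> 'rV[R]_n -> R) : Prop :=
  [/\ open U, Ysimplex n `<=` U,
      (forall y, U y -> differentiable Phi y),
      (forall (a : 'I_n) y, U y -> {for y, continuous (fun z => 'D_(evec a) Phi z)}) &
      (forall (a : 'I_n) y, Ysimplex n y -> 'D_(evec a) Phi y = c a y)].

Definition convex_on_Y (R : realType) (n : nat) (Phi : 'rV[R]_n -> R) : Prop :=
  forall (y z : 'rV[R]_n) (t : R), Ysimplex n y -> Ysimplex n z -> 0 <= t <= 1 ->
    Phi (t *: y + (1 - t) *: z) <= t * Phi y + (1 - t) * Phi z.

Notation profile K T := {dffun forall k : K, T k}.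

Definition interim_profile (R : realType) (n : nat) (K : finType) (T : K -> finType)
  (gamma : K -> R) (yh : forall k : K, T k -> 'rV[R]_n) : Prop :=
  forall (k : K) (t : T k), Delta_g n (gamma k) (yh k t).

Definition total_flow (R : realType) (n : nat) (K : finType) (T : K -> finType)
  (yh : forall k : K, T k -> 'rV[R]_n) (tau : profile K T) : 'rV[R]_n :=
  \sum_(k : K) yh k (tau k).

Definition Pmarg (R : realType) (Th K : finType) (T : K -> finType)
  (p : Th -> R) (pi : Th -> profile K T -> R) (k : K) (t : T k) : R :=
  \sum_(th : Th) \sum_(tau : profile K T | tau k == t) p th * pi th tau.

Definition interim_cost (R : realType) (n : nat) (Th K : finType) (T : K -> finType)
  (c : 'I_n -> 'rV[R]_n -> Th -> R) (p : Th -> R) (pi : Th -> profile K T -> R)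
  (yh : forall k : K, T k -> 'rV[R]_n) (k : K) (t : T k) (a : 'I_n) : R :=
  \sum_(th : Th) \sum_(tau : profile K T | tau k == t)
     p th * pi th tau * c a (total_flow yh tau) th.

Definition bayes_wardrop_eq (R : realType) (n : nat) (Th K : finType) (T : K -> finType)
  (c : 'I_n -> 'rV[R]_n -> Th -> R) (p : Th -> R) (pi : Th -> profile K T -> R)
  (yh : forall k : K, T k -> 'rV[R]_n) (eps : R) : Prop :=
  forall (k : K) (t : T k), 0 < Pmarg p pi t ->
    forall a b : 'I_n, 0 < yh k t 0 a ->
      interim_cost c p pi yh t a <= interim_cost c p pi yh t b + eps * Pmarg p pi t.

Definition Phi_pi (R : realType) (n : nat) (Th K : finType) (T : K -> finType)
  (Phi : Th -> 'rV[R]_n -> R) (p : Th -> R) (pi : Th -> profile K T -> R)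
  (yh : forall k : K, T k -> 'rV[R]_n) : R :=
  \sum_(th : Th) \sum_(tau : profile K T) p th * pi th tau * Phi th (total_flow yh tau).

From HB Require Import structures.
From mathcomp Require Import all_boot all_order all_algebra.
From mathcomp Require Import all_classical all_reals all_analysis.
From mathcomp Require Import ring lra.
Import Order.TTheory GRing.Theory Num.Theory.
Import numFieldNormedType.Exports.
Local Open Scope classical_set_scope.
Local Open Scope ring_scope.

(* Convexity gives Phi(y) - Phi(z) <= <y - z, grad Phi(y)>, and the gradient of
   Phi_theta is the cost vector c(y, theta).  Taking expectations over theta and
   tau and regrouping by populations and types turns the right-hand side into a
   sum over (k, tau^k) of <y^k - z^k, interim cost>.  Since y^k(tau^k) only uses
   actions that are alpha P(tau^k)-optimal, each such term is at most
   alpha gamma^k P(tau^k), and these bounds add up to alpha. *)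

Lemma derive_row_sum {R : realType} {n : nat} (f : 'rV[R]_n -> R) (y v : 'rV[R]_n) :
  differentiable f y -> 'D_v f y = \sum_(a < n) v 0 a * 'D_(evec a) f y.
Proof.
move=> df; rewrite deriveE // {1}(row_sum_delta v) linear_sum.
by apply: eq_bigr => a _; rewrite linearZ deriveE.
Qed.

Lemma convex_on_Y_derive_le {R : realType} {n : nat} {f : 'rV[R]_n -> R}
    {y z : 'rV[R]_n} :
  differentiable f y -> convex_on_Y f -> Ysimplex n y -> Ysimplex n z ->
  'D_(z - y) f y <= f z - f y.
Proof.
move=> df cf Yy Yz.
set g := fun h : R => h^-1 *: ((f \o shift y) (h *: (z - y)) - f y).
have right_sub : (0 : R)^'+ `=>` 0^'.
  move=> P; rewrite /at_right /dnbhs /within /=.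
  by apply: filterS => x Px x0; apply: Px; rewrite gt_eqF.
have g_cvg : g x @[x --> 0^'+] --> 'D_(z - y) f y.
  have := @diff_derivable _ _ _ _ _ (z - y) df; rewrite /derivable -/g => g0.
  exact: cvg_trans (cvg_app g right_sub) g0.
apply: (cvgr_to_le g_cvg); near=> t.
have t_gt0 : 0 < t by near: t; exact: nbhs_right_gt.
have t_le1 : t <= 1 by apply/ltW; near: t; exact: nbhs_right_lt.
have ft := cf z y t Yz Yy (introT andP (conj (ltW t_gt0) t_le1)).
rewrite /g /= /shift.
have -> : t *: (z - y) + y = t *: z + (1 - t) *: y.
  by rewrite scalerBr scalerBl scale1r -addrA [- _ + y]addrC.
rewrite -[X in X <= _]/(t^-1 * _) ler_pdivrMl // lerBlDr (le_trans ft) //.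
by rewrite le_eqVlt; apply/orP; left; apply/eqP; ring.
Unshelve. all: by end_near.
Qed.

Lemma potential_sub_le {R : realType} {n : nat} {U : set 'rV[R]_n}
    {f : 'rV[R]_n -> R} {c : 'I_n -> 'rV[R]_n -> R} {y z : 'rV[R]_n} :
  is_potential U f c -> convex_on_Y f -> Ysimplex n y -> Ysimplex n z ->
  f y - f z <= \sum_(a < n) (y 0 a - z 0 a) * c a y.
Proof.
move=> [_ YU df _ Df_c] cf Yy Yz.
have := convex_on_Y_derive_le (df _ (YU _ Yy)) cf Yy Yz.
rewrite derive_row_sum; last exact: df _ (YU _ Yy).
have -> : \sum_(a < n) (z - y) 0 a * 'D_(evec a) f y =
          - \sum_(a < n) (y 0 a - z 0 a) * c a y.
  by rewrite -sumrN; apply: eq_bigr => a _; rewrite Df_c // !mxE; ring.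
lra.
Qed.

Lemma wardrop_gap_le {R : realType} {n : nat} (g eps : R) (y z C : 'I_n -> R) :
  0 < g -> (forall a, 0 <= y a) -> (forall a, 0 <= z a) ->
  \sum_(a < n) y a = g -> \sum_(a < n) z a = g ->
  (forall a b, 0 < y a -> C a <= C b + eps) ->
  \sum_(a < n) (y a - z a) * C a <= g * eps.
Proof.
move=> g_gt0 y_ge0 z_ge0 sum_y sum_z y_opt.
(* g * <y - z, C> = sum_{a,b} y_a z_b (C_a - C_b), each term at most y_a z_b eps *)
have pair_eq : g * \sum_(a < n) (y a - z a) * C a =
    \sum_(a < n) \sum_(b < n) y a * z b * (C a - C b).
  have -> : \sum_(a < n) (y a - z a) * C a =
      \sum_(a < n) y a * C a - \sum_(b < n) z b * C b.
    by rewrite -sumrB; apply: eq_bigr => a _; ring.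
  transitivity (\sum_(a < n) (y a * C a * g - y a * \sum_(b < n) z b * C b)).
    by rewrite sumrB -!mulr_suml sum_y; ring.
  apply: eq_bigr => a _; rewrite -sum_z !mulr_sumr -sumrB.
  by apply: eq_bigr => b _; ring.
have pair_le : \sum_(a < n) \sum_(b < n) y a * z b * (C a - C b) <=
    \sum_(a < n) \sum_(b < n) y a * z b * eps.
  apply: ler_sum => a _; apply: ler_sum => b _.
  have [ya_gt0|] := boolP (0 < y a).
    by apply: ler_wpM2l; [exact: mulr_ge0 | have := y_opt a b ya_gt0; lra].
  by rewrite lt_def y_ge0 andbT negbK => /eqP ->; rewrite !mul0r.
have pair_sum : \sum_(a < n) \sum_(b < n) y a * z b * eps = g * (g * eps).
  rewrite -{1}sum_y -sum_z mulr_suml; apply: eq_bigr => a _.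
  by rewrite mulr_suml mulr_sumr; apply: eq_bigr => b _; ring.
by rewrite -(ler_pM2l g_gt0) pair_eq -pair_sum.
Qed.

Section BayesianGame.

Context {R : realType} {n : nat} {Th K : finType} {T : K -> finType}.
Context {p : Th -> R} { pi : Th -> profile K T -> R} {c : 'I_n -> 'rV[R]_n -> Th -> R}.

Lemma total_flow_Ysimplex {gamma : K -> R} {xh : forall k : K, T k -> 'rV[R]_n}
    (tau : profile K T) :
  interim_profile gamma xh -> \sum_(k : K) gamma k = 1 ->
  Ysimplex n (total_flow xh tau).
Proof.
move=> xh_Delta sum_gamma; split.
  move=> a; rewrite /total_flow summxE; apply: sumr_ge0 => k _.
  by have [] := xh_Delta k (tau k).
rewrite /total_flow -sum_gamma; under eq_bigr do rewrite summxE.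
rewrite exchange_big; apply: eq_bigr => k _.
by have [] := xh_Delta k (tau k).
Qed.

Hypothesis weight_ge0 : forall th tau, 0 <= p th * pi th tau.

Lemma Pmarg_ge0 (k : K) (t : T k) : 0 <= Pmarg p pi t.
Proof. by apply: sumr_ge0 => th _; apply: sumr_ge0. Qed.

Lemma interim_cost_Pmarg0 (yh : forall k : K, T k -> 'rV[R]_n) (k : K) (t : T k)
    (a : 'I_n) :
  Pmarg p pi t = 0 -> interim_cost c p pi yh t a = 0.
Proof.
move=> Pt0; apply: big1 => th _.
have /psumr_eq0P tau_w0 : \sum_(tau : profile K T | tau k == t) p th * pi th tau = 0.
  apply: (psumr_eq0P _ Pt0) => // th' _; exact: sumr_ge0.
by apply: big1 => tau /tau_w0 -> //; rewrite mul0r.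
Qed.

Lemma bayes_wardrop_eq_null_types (yh : forall k : K, T k -> 'rV[R]_n) (eps : R) :
  bayes_wardrop_eq c p pi yh eps ->
  forall (k : K) (t : T k) (a b : 'I_n), 0 < yh k t 0 a ->
    interim_cost c p pi yh t a <= interim_cost c p pi yh t b + eps * Pmarg p pi t.
Proof.
move=> yh_eq k t a b ya_gt0.
have [Pt_gt0|Pt_le0] := ltP 0 (Pmarg p pi t); first exact: yh_eq.
have Pt0 : Pmarg p pi t = 0 by apply/eqP; rewrite eq_le Pt_le0 Pmarg_ge0.
by rewrite !interim_cost_Pmarg0 // Pt0 mulr0 addr0.
Qed.

Lemma sum_Pmarg (k : K) :
  \sum_(th : Th) p th = 1 -> (forall th, \sum_(tau : profile K T) pi th tau = 1) ->
  \sum_(t : T k) Pmarg p pi t = 1.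
Proof.
move=> sum_p sum_pi; rewrite /Pmarg exchange_big -sum_p; apply: eq_bigr => th _.
rewrite -[in RHS](mulr1 (p th)) -(sum_pi th) mulr_sumr.
by rewrite [RHS](partition_big (fun tau : profile K T => tau k) xpredT).
Qed.

Lemma ex_ante_deviation_interim (yh zh : forall k : K, T k -> 'rV[R]_n) :
  \sum_(th : Th) \sum_(tau : profile K T) p th * pi th tau *
    \sum_(a < n) (total_flow yh tau 0 a - total_flow zh tau 0 a) *
      c a (total_flow yh tau) th
  = \sum_(k : K) \sum_(t : T k) \sum_(a < n)
      (yh k t 0 a - zh k t 0 a) * interim_cost c p pi yh t a.
Proof.
pose G k th tau a := p th * pi th tau * c a (total_flow yh tau) th *
  (yh k (tau k) 0 a - zh k (tau k) 0 a).
transitivity (\sum_(a < n) \sum_(th : Th) \sum_(tau : profile K T) \sum_(k : K)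
    G k th tau a).
  rewrite [RHS]exchange_big; apply: eq_bigr => th _.
  rewrite [RHS]exchange_big; apply: eq_bigr => tau _.
  rewrite mulr_sumr; apply: eq_bigr => a _.
  rewrite /total_flow !summxE -sumrB mulr_suml mulr_sumr.
  by apply: eq_bigr => k _; rewrite /G; ring.
transitivity (\sum_(k : K) \sum_(a < n) \sum_(th : Th) \sum_(tau : profile K T)
    G k th tau a).
  rewrite [RHS]exchange_big; apply: eq_bigr => a _.
  by rewrite [RHS]exchange_big; apply: eq_bigr => th _; rewrite [RHS]exchange_big.
apply: eq_bigr => k _; rewrite [RHS]exchange_big; apply: eq_bigr => a _.
rewrite /interim_cost; under [RHS]eq_bigr do rewrite mulr_sumr.
rewrite [RHS]exchange_big; apply: eq_bigr => th _.
rewrite (partition_big (fun tau : profile K T => tau k) xpredT) //=.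
apply: eq_bigr => t _; rewrite mulr_sumr.
by apply: eq_bigr => tau /eqP <-; rewrite /G; ring.
Qed.

End BayesianGame.

Theorem mainTheorem6 (R : realType) (n : nat) (Th : finType)
  (p : Th -> R) (c : 'I_n -> 'rV[R]_n -> Th -> R)
  (Phi : Th -> 'rV[R]_n -> R) (U : Th -> set 'rV[R]_n)
  (K : finType) (gamma : K -> R) (T : K -> finType)
  (pi : Th -> {dffun forall k : K, T k} -> R)
  (* basic game *)
  (hp_pos : forall th, 0 < p th) (hp_sum : \sum_(th : Th) p th = 1)
  (hc_cont : forall (a : 'I_n) (th : Th),
      {within Ysimplex n, continuous (fun y => c a y th)})
  (* potential game with convex potentials *)
  (hpot : forall th, is_potential (U th) (Phi th) (fun a y => c a y th))
  (hconv : forall th, convex_on_Y (Phi th))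
  (* information structure *)
  (hg_pos : forall k, 0 < gamma k) (hg_sum : \sum_(k : K) gamma k = 1)
  (hpi_nn : forall th tau, 0 <= pi th tau)
  (hpi_sum : forall th, \sum_(tau : {dffun forall k : K, T k}) pi th tau = 1)
  (alpha : R) (halpha : 0 < alpha)
  (yh : forall k : K, T k -> 'rV[R]_n)
  (hyh : interim_profile gamma yh)
  (heq : bayes_wardrop_eq c p pi yh alpha) :
  forall zh : forall k : K, T k -> 'rV[R]_n, interim_profile gamma zh ->
    Phi_pi Phi p pi yh <= Phi_pi Phi p pi zh + alpha.
Proof.
move=> zh hzh.
have w_ge0 th tau : 0 <= p th * pi th tau by rewrite mulr_ge0 ?hpi_nn ?ltW.
have interim_gap k t : \sum_(a < n) (yh k t 0 a - zh k t 0 a) *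
    interim_cost c p pi yh t a <= gamma k * (alpha * Pmarg p pi t).
  have [[yh_ge0 yh_sum] [zh_ge0 zh_sum]] := (hyh k t, hzh k t).
  apply: wardrop_gap_le => //.
  exact: bayes_wardrop_eq_null_types.
suff : Phi_pi Phi p pi yh - Phi_pi Phi p pi zh <= alpha by lra.
apply: le_trans (_ : \sum_(th : Th) \sum_(tau : profile K T) p th * pi th tau *
    \sum_(a < n) (total_flow yh tau 0 a - total_flow zh tau 0 a) *
      c a (total_flow yh tau) th <= _).
  rewrite /Phi_pi -sumrB; apply: ler_sum => th _; rewrite -sumrB.
  apply: ler_sum => tau _; rewrite -mulrBr ler_wpM2l //.
  exact (potential_sub_le (hpot th) (hconv th)
    (total_flow_Ysimplex tau hyh hg_sum) (total_flow_Ysimplex tau hzh hg_sum)).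
rewrite ex_ante_deviation_interim.
apply: le_trans (ler_sum _ (fun k _ => ler_sum _ (fun t _ => interim_gap k t))) _.
rewrite -[leRHS]mul1r -hg_sum mulr_suml; apply/ler_sum => k _.
by rewrite -mulr_sumr -mulr_sumr sum_Pmarg // mulr1.
Qed.
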